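(* Let $G$ be a graph with nonnegative edge costs, with distinguished vertices $start$ and $goal$, and let $c(x,y)$ denote the cost of a cheapest path from $x$ to $y$. Let $h_F$ and $h_B$ be nonnegative heuristic functions that are admissible and consistent (forward and backward, respectively). Fix real numbers $W \ge 1$ and $\lambda \le W$. For a direction $D \in \{F,B\}$ with opposite direction $\bar D$, and a node $n$ reached in direction $D$ with cost $g_D(n)$, define $b_D(n) = g_D(n) + h_D(n) + (g_D(n) - h_{\bar D}(n))$ and $b_{W_D}(n) = g_D(n) + W\cdot h_D(n) + \lambda\cdot (g_D(n) - h_{\bar D}(n))$. Then $b_{W_D}(n) \le W \cdot b_D(n)$ for every such node $n$ and every direction $D$.
   Context: The forward search starts at $start$ and the backward search at $goal$. For a node $n$ reached in the forward direction, $g_F(n)$ is the cost of the path from $start$ to $n$ by which it was reached; for the backward direction, $g_B(n)$ is the cost of the path from $n$ to $goal$ by which it was reached. $h_F(s)$ estimates $c(s,goal)$ and $h_B(s)$ estimates $c(start,s)$. $h_F$ is forward admissible if $h_F(s)\le c(s,goal)$ for all $s$, and forward consistent if $h_F(s)\le c(s,s')+h_F(s')$ for all $s,s'$; backward admissibility and consistency of $h_B$ are defined analogously ($h_B(s)\le c(start,s)$, and $h_B(s')\le c(s,s')+h_B(s)$). *)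

From HB Require Import structures.
From mathcomp Require Import all_boot all_order all_algebra.
From mathcomp Require Import boolp classical_sets reals constructive_ereal ereal.
Set Implicit Arguments. Unset Strict Implicit. Unset Printing Implicit Defensive.
Import Order.TTheory GRing.Theory Num.Theory.
Local Open Scope ring_scope.
Local Open Scope classical_set_scope.

Section Graph.
Context {R : realType} {V : Type} (E : V -> V -> Prop) (w : V -> V -> R).

Fixpoint is_walk (x : V) (p : seq V) : Prop :=
  match p with [::] => True | y :: q => E x y /\ is_walk y q end.

Fixpoint wcost (x : V) (p : seq V) : R :=
  match p with [::] => 0 | y :: q => w x y + wcost y q end.

Definition walk_from_to (x y : V) (p : seq V) : Prop := is_walk x p /\ last x p = y.

(* c(x,y): cost of a cheapest path from x to y (+oo if none) *)
Definition cdist (x y : V) : \bar R :=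
  ereal_inf [set (wcost x p)%:E | p in walk_from_to x y].

End Graph.

Inductive dir := Fwd | Bwd.
Definition opp_dir (D : dir) : dir := if D is Fwd then Bwd else Fwd.

Section Search.
Context {R : realType} {V : Type} (E : V -> V -> Prop) (w : V -> V -> R)
  (start goal : V) (hF hB : V -> R).

Definition heur (D : dir) : V -> R := if D is Fwd then hF else hB.

Definition fwd_admissible : Prop := forall s, ((hF s)%:E <= cdist E w s goal)%E.
Definition fwd_consistent : Prop :=
  forall s s', ((hF s)%:E <= cdist E w s s' + (hF s')%:E)%E.
Definition bwd_admissible : Prop := forall s, ((hB s)%:E <= cdist E w start s)%E.
Definition bwd_consistent : Prop :=
  forall s s', ((hB s')%:E <= cdist E w s s' + (hB s)%:E)%E.

Definition reached (D : dir) (n : V) (g : R) : Prop :=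
  match D with
  | Fwd => exists p, walk_from_to E start n p /\ wcost w start p = g
  | Bwd => exists p, walk_from_to E n goal p /\ wcost w n p = g
  end.

Definition bval (D : dir) (n : V) (g : R) : R :=
  g + heur D n + (g - heur (opp_dir D) n).

Definition bWval (Wt lam : R) (D : dir) (n : V) (g : R) : R :=
  g + Wt * heur D n + lam * (g - heur (opp_dir D) n).

End Search.

(* W * b_D(n) - b_{W_D}(n) = (W - 1) g + (W - lambda) (g - h_opp(n)), so the
   bound holds as soon as 0 <= h_opp(n) <= g; the upper bound is admissibility
   of h_opp applied to the path of cost g that reached n. *)
From HB Require Import structures.
From mathcomp Require Import all_boot all_order all_algebra.
From mathcomp Require Import boolp classical_sets reals constructive_ereal ereal.
From mathcomp Require Import lra.
Import Order.TTheory GRing.Theory Num.Theory.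
Local Open Scope ring_scope.

Section Bounds.
Context {R : realType} {V : Type} (E : V -> V -> Prop) (w : V -> V -> R)
  (start goal : V) (hF hB : V -> R).

Lemma cdist_le_wcost {x y : V} {p : seq V} :
  walk_from_to E x y p -> (cdist E w x y <= (wcost w x p)%:E)%E.
Proof. by move=> xyp; apply: ereal_inf_lbound; exists p. Qed.

Lemma reached_opp_heur_le (D : dir) (n : V) (g : R) :
  fwd_admissible E w goal hF -> bwd_admissible E w start hB ->
  reached E w start goal D n g -> heur hF hB (opp_dir D) n <= g.
Proof.
move=> hFadm hBadm; rewrite -lee_fin.
case: D => -[p [walk_p <-]] /=.
- exact: le_trans (hBadm n) (cdist_le_wcost walk_p).
- exact: le_trans (hFadm n) (cdist_le_wcost walk_p).
Qed.

Lemma bWval_le_scaled_bval (W lam : R) (D : dir) (n : V) (g : R) :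
  1 <= W -> lam <= W ->
  0 <= heur hF hB (opp_dir D) n <= g ->
  bWval hF hB W lam D n g <= W * bval hF hB D n g.
Proof.
rewrite /bWval /bval; set h := heur _ _ D n; set h' := heur _ _ _ n.
move=> W_ge1 lam_leW /andP[h'_ge0 h'_leg].
have : 0 <= (W - 1) * g by apply: mulr_ge0; lra.
have : 0 <= (W - lam) * (g - h') by apply: mulr_ge0; lra.
lra.
Qed.

End Bounds.

Theorem lemma1 (R : realType) (V : Type) (E : V -> V -> Prop) (w : V -> V -> R)
  (start goal : V) (hF hB : V -> R) (W lam : R) :
  (forall x y, E x y -> 0 <= w x y) ->
  (forall s, 0 <= hF s) -> (forall s, 0 <= hB s) ->
  fwd_admissible E w goal hF -> fwd_consistent E w hF ->
  bwd_admissible E w start hB -> bwd_consistent E w hB ->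
  1 <= W -> lam <= W ->
  forall (D : dir) (n : V) (g : R),
    reached E w start goal D n g ->
    bWval hF hB W lam D n g <= W * bval hF hB D n g.
Proof.
move=> _ hF_ge0 hB_ge0 hFadm _ hBadm _ W_ge1 lam_leW D n g reached_n.
apply: bWval_le_scaled_bval => //; apply/andP; split.
- by case: D {reached_n}.
- exact: reached_opp_heur_le hFadm hBadm reached_n.
Qed.
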